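(* Let $n,k,r$ be integers with $k,r\geq 2$ and $n\geq k+r-1$. If $H$ is a vertex-$k$-maximal $r$-uniform hypergraph on $n$ vertices, then $\overline{\kappa}(H)=\kappa(H)=k$.
   Context: A hypergraph $H=(V,E)$ consists of a finite vertex set $V$ and a set $E$ of non-empty subsets of $V$ (edges). $H$ is $r$-uniform if every edge has exactly $r$ elements. $K_n^r$ denotes the complete $r$-uniform hypergraph on $n$ vertices (all $r$-subsets are edges; no edges if $n<r$). The complement $H^c$ of an $r$-uniform hypergraph $H=(V,E)$ is the $r$-uniform hypergraph on $V$ whose edges are the $r$-subsets of $V$ not in $E$. A subhypergraph of $H$ is $H'=(V',E')$ with $V'\subseteq V$, $E'\subseteq E$ (and edges of $E'$ contained in $V'$). For an $r$-subset $e\in E(H^c)$, $H+e=(V,E\cup\{e\})$. For $Y\subseteq V$, $H[Y]$ is the induced hypergraph with vertex set $Y$ and edges $\{e\in E: e\subseteq Y\}$, and $H-Y=H[V\setminus Y]$. A path is an alternating sequence $v_1,e_1,v_2,\dots,e_s,v_{s+1}$ of distinct vertices and distinct edges with $v_i,v_{i+1}\in e_i$; $H$ is connected if any two vertices are joined by a path. A vertex-cut is a set $X\subseteq V$ with $H-X$ disconnected. The vertex-connectivity $\kappa(H)$ is the minimum size of a vertex-cut if $H$ has one, and $|V(H)|-1$ otherwise. $\overline{\kappa}(H)=\max\{\kappa(H'): H'\text{ a subhypergraph of }H\}$. An $r$-uniform hypergraph $H$ is vertex-$k$-maximal if $\overline{\kappa}(H)\leq k$ but $\overline{\kappa}(H+e)\geq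 k+1$ for every $e\in E(H^c)$. *)

From mathcomp Require Import all_boot.
From Stdlib Require Import ClassicalEpsilon.
Set Implicit Arguments. Unset Strict Implicit. Unset Printing Implicit Defensive.

Definition hypergraph (T : finType) := ({set T} * {set {set T}})%type.

Section Hyper.
Variable T : finType.
Implicit Types (H : hypergraph T) (X Y : {set T}) (e : {set T}).

Definition vtx H := H.1.
Definition edg H := H.2.

Definition wf_hypergraph H :=
  forall e, e \in edg H -> e != set0 /\ e \subset vtx H.

Definition r_uniform (r : nat) H := forall e, e \in edg H -> #|e| = r.

Definition subhypergraph (H' H : hypergraph T) : bool :=
  [&& vtx H' \subset vtx H, edg H' \subset edg H &
      [forall e in edg H', e \subset vtx H']].

Definition compl_edge (r : nat) H e : bool :=
  [&& e \subset vtx H, #|e| == r & e \notin edg H].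

Definition add_edge H e : hypergraph T := (vtx H, edg H :|: [set e]).

Definition induced H Y : hypergraph T := (Y, [set e in edg H | e \subset Y]).
Definition del_vertices H X : hypergraph T := induced H (vtx H :\: X).

Definition hpath H (x y : T) : Prop :=
  exists (vs : seq T) (es : seq {set T}),
    [/\ size vs = (size es).+1, uniq vs, uniq es,
        (nth x vs 0 = x /\ last x vs = y) /\ {subset es <= edg H} &
        forall i, i < size es ->
          nth x vs i \in nth set0 es i /\ nth x vs i.+1 \in nth set0 es i].

Definition hconnected H : Prop :=
  forall x y, x \in vtx H -> y \in vtx H -> hpath H x y.

Definition hconnectedb H : bool :=
  if excluded_middle_informative (hconnected H) then true else false.

Definition vertex_cut H X : bool :=
  (X \subset vtx H) && ~~ hconnectedb (del_vertices H X).

(* kappa(H): min size of a vertex-cut if one exists, else |V|-1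
   (truncated at 0 when V is empty) *)
Definition kappa H : nat :=
  if [exists X, vertex_cut H X]
  then \big[minn/#|vtx H|]_(X | vertex_cut H X) #|X|
  else #|vtx H|.-1.

Definition kappa_bar H : nat :=
  \max_(H' : hypergraph T | subhypergraph H' H) kappa H'.

Definition vertex_k_maximal (r k : nat) H : Prop :=
  kappa_bar H <= k /\
  forall e, compl_edge r H e -> k.+1 <= kappa_bar (add_edge H e).

End Hyper.

(* Clearly kappa H <= kappa_bar H <= k, so it suffices to show that every
   vertex-cut X of H has at least k vertices.  If |X| < k, pick a and b in
   different components of H - X and extend {a, b} to an r-set e avoiding X
   (possible as n - |X| >= r); e is not an edge of H.  By maximality H + e has
   a subhypergraph H' with kappa H' > k, and H' must contain e.  For w in e,
   the set (X /\ V(H')) + w is then too small to be a cut of H', so any two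
   vertices of H' - X other than w are joined in H - X.  Taking w = a or
   w = b shows that H' - X has no vertex besides a and b, whence
   kappa H' <= |V(H')| - 1 <= |X| + 1 <= k, a contradiction. *)

From mathcomp Require Import all_boot zify.
From Stdlib Require Import Classical ClassicalEpsilon.
Set Implicit Arguments. Unset Strict Implicit. Unset Printing Implicit Defensive.

Section Paths.
Variable T : finType.
Implicit Types (H : hypergraph T) (E : {set {set T}}).

(* The body of [hpath], so that [hpath H x y] unfolds to
   [exists vs es, path_seq (edg H) x y vs es]. *)
Definition path_seq E (x y : T) (vs : seq T) (es : seq {set T}) :=
  [/\ size vs = (size es).+1, uniq vs, uniq es,
      (nth x vs 0 = x /\ last x vs = y) /\ {subset es <= E} &
      forall i, i < size es ->
        nth x vs i \in nth set0 es i /\ nth x vs i.+1 \in nth set0 es i].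

Lemma path_seq_nil E x : path_seq E x x [:: x] [::].
Proof. by split => //; split. Qed.

Lemma path_seq_take E x y vs es j : path_seq E x y vs es -> j < size vs ->
  path_seq E x (nth x vs j) (take j.+1 vs) (take j es).
Proof.
move=> [Hs Hu Hue [[H0 _] Hsub] Hi] Hj.
have Hjs : j <= size es by rewrite -ltnS -Hs.
split; rewrite ?size_takel //; try exact: take_uniq.
- split; last by move=> f /mem_take /Hsub.
  by rewrite nth_take //; split => //; rewrite -nth_last size_takel //= nth_take.
- by move=> i hi; rewrite !nth_take //; [apply: Hi; apply: leq_trans Hjs|apply: ltnW].
Qed.

Lemma path_seq_rcons E x y vs es f z : path_seq E x y vs es ->
  f \in E -> y \in f -> z \in f -> z \notin vs -> f \notin es ->
  path_seq E x z (rcons vs z) (rcons es f).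
Proof.
move=> [Hs Hu Hue [[H0 Hl] Hsub] Hi] fE yf zf zv fe.
split; rewrite ?size_rcons ?Hs ?rcons_uniq ?zv ?fe //.
- split; last by move=> g; rewrite mem_rcons inE => /orP [/eqP -> //|/Hsub].
  by rewrite nth_rcons Hs last_rcons.
- move=> i; rewrite ltnS leq_eqVlt => /orP [/eqP ->|hi].
  + rewrite !nth_rcons Hs ltnn eqxx ltnSn ltnn eqxx; split => //.
    by rewrite -[size es]/((size es).+1.-1) -Hs nth_last Hl.
  + by rewrite !nth_rcons Hs !ltnS (ltnW hi) hi; exact: Hi.
Qed.

(* If z already occurs on the path we cut it there; if only f does, we cut
   just after the first endpoint of f and then append f. *)
Lemma hpath_step H x y f z :
  hpath H x y -> f \in edg H -> y \in f -> z \in f -> hpath H x z.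
Proof.
move=> [vs [es P]] fE yf zf.
have [zv|zv] := boolP (z \in vs).
  exists (take (index z vs).+1 vs), (take (index z vs) es).
  by have := path_seq_take P (j := index z vs); rewrite index_mem nth_index //; apply.
have [fe|fe] := boolP (f \in es); last first.
  by exists (rcons vs z), (rcons es f); exact: path_seq_rcons P fE yf zf zv fe.
have ilt : index f es < size es by rewrite index_mem.
case: (P) => Hs _ _ _ Hi.
exists (rcons (take (index f es).+1 vs) z), (rcons (take (index f es) es) f).
apply: (path_seq_rcons (path_seq_take P _)) => //.
- by rewrite Hs ltnW.
- by move: (Hi _ ilt).1; rewrite nth_index.
- by apply: contra zv => /mem_take.
- by apply/negP => /index_ltn; rewrite ltnn.
Qed.

Lemma hpath_refl H x : hpath H x x.
Proof. by exists [:: x], [::]; apply: path_seq_nil. Qed.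

Lemma hpath_edge H x y f : f \in edg H -> x \in f -> y \in f -> hpath H x y.
Proof. exact: hpath_step (hpath_refl H x). Qed.

Lemma hpath_trans H x y z : hpath H x y -> hpath H y z -> hpath H x z.
Proof.
move=> Hxy [vs [es [Hs _ _ [[H0 Hl] Hsub] Hi]]].
suff: forall i, i <= size es -> hpath H x (nth y vs i).
  by move/(_ _ (leqnn _)); rewrite -[size es]/((size es).+1.-1) -Hs nth_last Hl.
elim=> [_|i IH hi]; first by rewrite H0.
have [Ha Hb] := Hi i hi.
by apply: hpath_step (IH (ltnW hi)) _ Ha Hb; apply: Hsub; rewrite mem_nth.
Qed.

Lemma hpath_sub H1 H2 x y :
  {subset edg H1 <= edg H2} -> hpath H1 x y -> hpath H2 x y.
Proof.
move=> S [vs [es [Hs Hu Hue [Hend Hsub] Hi]]].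
by exists vs, es; split => //; split => // f /Hsub /S.
Qed.

End Paths.

Section Connectivity.
Variable T : finType.
Implicit Types (H : hypergraph T) (X : {set T}).

Lemma vertex_cutP H X : vertex_cut H X <->
  X \subset vtx H /\ exists x y,
    [/\ x \in vtx H :\: X, y \in vtx H :\: X & ~ hpath (del_vertices H X) x y].
Proof.
rewrite /vertex_cut /hconnectedb; case: excluded_middle_informative => [C|nC].
  by rewrite andbF; split=> // [[_ [x [y [hx hy []]]]]]; exact: C.
rewrite andbT; split=> [sX|[]//]; split=> //.
apply: NNPP => nxy; apply: nC => x y hx hy.
by apply: NNPP => np; apply: nxy; exists x, y.
Qed.

Lemma vertex_cut_card H X : vertex_cut H X -> #|X| <= #|vtx H| - 2.
Proof.
move=> /vertex_cutP [sX [x [y [hx hy np]]]].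
have xy : x != y by apply: contra_notN np => /eqP ->; apply: hpath_refl.
have : #|[set x; y]| <= #|vtx H :\: X|.
  by apply: subset_leq_card; apply/subsetP => z /set2P [->|->].
rewrite cards2 xy cardsDS //; lia.
Qed.

Lemma bigmin_le (I : eqType) (s : seq I) (P : pred I) (F : I -> nat) x0 y :
  y \in s -> P y -> \big[minn/x0]_(i <- s | P i) F i <= F y.
Proof.
elim: s => // a s IH; rewrite inE big_cons => /orP [/eqP <- -> |ys Py].
  exact: geq_minl.
by case: ifP => _; [rewrite (leq_trans (geq_minr _ _)) // IH | exact: IH].
Qed.

Lemma kappa_le_cut H X : vertex_cut H X -> kappa H <= #|X|.
Proof.
move=> cX; rewrite /kappa ifT; last by apply/existsP; exists X.
by apply: bigmin_le => //; rewrite mem_index_enum.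
Qed.

Lemma kappa_le_card H : kappa H <= #|vtx H|.-1.
Proof.
rewrite /kappa; case: ifP => // /existsP [X cX].
rewrite (leq_trans (bigmin_le (fun Y : {set T} => #|Y|) _ (mem_index_enum X) cX)) //.
by have := vertex_cut_card cX; lia.
Qed.

Lemma kappa_geq H m : m <= #|vtx H|.-1 ->
  (forall X, vertex_cut H X -> m <= #|X|) -> m <= kappa H.
Proof.
move=> mV mX; rewrite /kappa; case: ifP => // _.
apply: (big_ind (fun j => m <= j)) => // [|i j hi hj]; first lia.
by rewrite leq_min hi hj.
Qed.

Lemma kappa_le_kappa_bar H : wf_hypergraph H -> kappa H <= kappa_bar H.
Proof.
move=> wfH; apply: (leq_bigmax_cond H).
by rewrite /subhypergraph !subxx; apply/forall_inP => e /wfH [].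
Qed.

Lemma kappa_bar_gtP H k :
  k < kappa_bar H -> exists2 H', subhypergraph H' H & k < kappa H'.
Proof.
move=> lt_k.
have [/existsP [H' /andP [sH' ltH']]|/existsPn none] :=
  boolP [exists H', subhypergraph H' H && (k < kappa H')]; first by exists H'.
move: lt_k; rewrite ltnNge => /negP []; apply/bigmax_leqP => H' sH'.
by move: (none H'); rewrite sH' /= -leqNgt.
Qed.

End Connectivity.

Lemma subset_card_between (T : finType) (S D : {set T}) m :
  S \subset D -> #|S| <= m <= #|D| ->
  exists e : {set T}, [/\ S \subset e, e \subset D & #|e| = m].
Proof.
move Hd : (m - #|S|) => d; elim: d S Hd => [|d IH] S Hd sS /andP [hS hD].
  by exists S; split => //; apply/eqP; rewrite eqn_leq hS -subn_eq0 Hd.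
have /properP [_ [x xD xS]] : S \proper D by rewrite properEcard sS /=; lia.
have [|||e [s1 s2 s3]] := IH (x |: S); rewrite ?subUset ?sub1set ?xD ?cardsU1 ?xS //.
- lia.
- by apply/andP; split => //; lia.
by exists e; split => //; apply: subset_trans s1; exact: subsetUr.
Qed.

Section SmallCut.
Variables (T : finType) (r k : nat) (H : hypergraph T).
Hypothesis r_gt1 : 1 < r.
Implicit Types (X : {set T}) (e : {set T}).

Lemma cut_compl_edge X : vertex_cut H X -> r <= #|vtx H :\: X| ->
  exists a b e, [/\ a \in e, b \in e, compl_edge r H e, e \subset vtx H :\: X &
                    ~ hpath (del_vertices H X) a b].
Proof.
move=> /vertex_cutP [sX [a [b [ha hb np]]]] rD.
have ab : a != b by apply: contra_notN np => /eqP ->; apply: hpath_refl.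
have sab : [set a; b] \subset vtx H :\: X by apply/subsetP => z /set2P [->|->].
have [|e [Se eD ce]] := subset_card_between sab (m := r); first by rewrite cards2 ab r_gt1.
exists a, b, e; split => //; try by apply: (subsetP Se); rewrite !inE eqxx ?orbT.
rewrite /compl_edge (subset_trans eD (subsetDl _ _)) ce eqxx /=.
apply: contra_notN np => eE; apply: (hpath_edge (f := e)).
- by rewrite inE eE.
- by apply: (subsetP Se); rewrite !inE eqxx.
- by apply: (subsetP Se); rewrite !inE eqxx orbT.
Qed.

Lemma subhypergraph_add_edge_notin (H' : hypergraph T) e :
  subhypergraph H' (add_edge H e) -> e \notin edg H' -> subhypergraph H' H.
Proof.
case/and3P => sV sE sf eH'; rewrite /subhypergraph sV sf andbT.
apply/subsetP => f fE'; move: (subsetP sE f fE'); rewrite !inE => /orP [//|/eqP fe].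
by rewrite -fe fE' in eH'.
Qed.

Lemma vertex_k_maximal_witness e : vertex_k_maximal r k H -> compl_edge r H e ->
  exists2 H', subhypergraph H' (add_edge H e) & e \in edg H' /\ k < kappa H'.
Proof.
move=> [kbH maxH] ce; have [H' sH' ltH'] := kappa_bar_gtP (maxH e ce).
exists H' => //; split => //; apply: contraLR ltH' => eH'; rewrite -leqNgt.
apply: leq_trans kbH; apply: (leq_bigmax_cond H').
exact: (subhypergraph_add_edge_notin sH' eH').
Qed.

(* An edge of H' avoiding w is not e, and an edge of H' avoiding
   X /\ V(H') avoids X. *)
Lemma edg_del_vertices_add_edge (H' : hypergraph T) e X w :
  subhypergraph H' (add_edge H e) -> w \in e ->
  {subset edg (del_vertices H' ((X :&: vtx H') :|: [set w]))
     <= edg (del_vertices H X)}.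
Proof.
case/and3P => sV sE _ we f; rewrite !inE => /andP [fE' fY].
have /setUP [fE|/set1P fe] := subsetP sE f fE'; last first.
  by move: (subsetP fY w); rewrite fe => /(_ we); rewrite !inE eqxx orbT.
rewrite fE; apply/subsetP => z zf; move: (subsetP fY z zf).
rewrite !inE negb_or negb_and => /andP [/andP [zX _] zV'].
by rewrite (subsetP sV z zV') andbT; move: zX; rewrite zV' orbF.
Qed.

Lemma hpath_del_vertices_avoiding (H' : hypergraph T) e X w p q :
  subhypergraph H' (add_edge H e) -> w \in e -> w \in vtx H' ->
  #|X|.+1 < kappa H' ->
  p \in vtx H' :\: X -> q \in vtx H' :\: X -> p != w -> q != w ->
  hpath (del_vertices H X) p q.
Proof.
move=> sH' we wV' ltX pV qV pw qw; apply: NNPP => npq.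
set Y := (X :&: vtx H') :|: [set w].
have cY : vertex_cut H' Y.
  apply/vertex_cutP; split; first by rewrite subUset subsetIr sub1set.
  exists p, q; split.
  - by move: pV; rewrite !inE negb_or negb_and pw => /andP [-> ->].
  - by move: qV; rewrite !inE negb_or negb_and qw => /andP [-> ->].
  - by move/(hpath_sub (edg_del_vertices_add_edge sH' we)).
have cardY : #|Y| <= #|X|.+1.
  rewrite (leq_trans (leq_card_setU _ _)) // cards1 addn1 ltnS.
  exact/subset_leq_card/subsetIl.
by have := kappa_le_cut cY; lia.
Qed.

Lemma vertex_k_maximal_cut_ge X : vertex_k_maximal r k H ->
  vertex_cut H X -> k + r - 1 <= #|vtx H| -> k <= #|X|.
Proof.
move=> maxH cX cardV; rewrite leqNgt; apply/negP => ltX.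
have rD : r <= #|vtx H :\: X|.
  by case/vertex_cutP: cX => sX _; rewrite cardsDS //; lia.
have [a [b [e [ae be ce eD np]]]] := cut_compl_edge cX rD.
have [H' sH' [eH' ltH']] := vertex_k_maximal_witness maxH ce.
have eV' : e \subset vtx H' by case/and3P: sH' => _ _ /forall_inP; apply.
have ltX' : #|X|.+1 < kappa H' by lia.
have inV' c : c \in e -> c \in vtx H' :\: X.
  move=> ce'; rewrite !inE (subsetP eV') // andbT.
  by move: (subsetP eD c ce'); rewrite !inE => /andP [].
have ab : a != b by apply: contra_notN np => /eqP ->; apply: hpath_refl.
have join w p q : w \in e -> p \in vtx H' :\: X -> q \in vtx H' :\: X ->
    p != w -> q != w -> hpath (del_vertices H X) p q.
  by move=> we; apply: hpath_del_vertices_avoiding sH' we (subsetP eV' w we) ltX'.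
case: (pickP [pred c in vtx H' :\: X | (c != a) && (c != b)]) => [c|none].
  move=> /and3P [cV ca cb].
  have [ac|nac] := classic (hpath (del_vertices H X) a c); last first.
    by apply: nac; apply: (join b a c be (inV' a ae) cV ab cb).
  apply: np; apply: hpath_trans ac _.
  by apply: (join a c b ae cV (inV' b be) ca); rewrite eq_sym.
have sV' : vtx H' \subset X :|: [set a; b].
  apply/subsetP => z zV; move: (none z); rewrite /= !inE zV andbT.
  by case: (z \in X) => //=; case: (z == a) => //=; case: (z == b).
have cardV' : #|vtx H'| <= #|X| + 2.
  rewrite (leq_trans (subset_leq_card sV')) //.
  by rewrite (leq_trans (leq_card_setU _ _)) // cards2 ab.
by have := kappa_le_card H'; lia.
Qed.

End SmallCut.

Theorem lemma2p1 (n k r : nat) (E : {set {set 'I_n}}) :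
  2 <= k -> 2 <= r -> k + r - 1 <= n ->
  wf_hypergraph ((setT, E) : hypergraph 'I_n) ->
  r_uniform r ((setT, E) : hypergraph 'I_n) ->
  vertex_k_maximal r k ((setT, E) : hypergraph 'I_n) ->
  kappa_bar ((setT, E) : hypergraph 'I_n) = k /\
  kappa ((setT, E) : hypergraph 'I_n) = k.
Proof.
move=> _ r_ge2 n_ge wfH _ maxH.
set H := ((setT, E) : hypergraph 'I_n).
have cardV : #|vtx H| = n by rewrite /= cardsT card_ord.
have kH_kb := kappa_le_kappa_bar wfH.
have kb_k : kappa_bar H <= k by case: maxH.
suff k_kH : k <= kappa H.
  have kb_ge : k <= kappa_bar H := leq_trans k_kH kH_kb.
  have kH_le : kappa H <= k := leq_trans kH_kb kb_k.
  by split; apply/anti_leq/andP.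
apply: kappa_geq => [|X cX]; first by rewrite cardV; lia.
by apply: (vertex_k_maximal_cut_ge r_ge2 maxH cX); rewrite cardV.
Qed.
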